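(* Let $\mathcal{C}$ be an assembler satisfying (S), (Ep), (D) with sink $S$, and let $U$ be a noninitial object of $\mathcal{C}$. Let $\mathcal{C}_U$ be the full subcategory of $\mathcal{C}$ on those objects $A$ with $\mathrm{Hom}_{\mathcal{C}}(A,U)\neq\emptyset$. Let $\mathcal{F}=\{f_A:A\to S\}$ be a family of morphisms to the sink of $\mathcal{C}$ (with $f_S=1_S$) and let $\mathcal{F}'=\{f'_A:A\to U\}_{A\in\mathcal{C}_U}$ be a family of morphisms to $U$ in $\mathcal{C}_U$ (with $f'_U=1_U$) satisfying $f_A=f_Uf'_A$ for all $A$ in $\mathcal{C}_U$. Let $G$ and $G'$ be the groups associated to $\mathcal{C}$ (with sink $S$) and $\mathcal{C}_U$ (with sink $U$) respectively. Then there exists a group isomorphism $\varphi:G'\to G$ such that $\pi_{\mathcal{F}}\circ j=\varphi_*\circ\pi_{\mathcal{F}'}$ as functors $\mathcal{C}_U\to\mathcal{S}_G$, where $j:\mathcal{C}_U\to\mathcal{C}$ is the inclusion and $\varphi_*:\mathcal{S}_{G'}\to\mathcal{S}_G$ is induced by $\varphi$.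
   Context: An assembler is a small category with a Grothendieck topology satisfying: (I) there is an initial object $\varnothing$ covered by the empty family; (R) any two finite disjoint covering families of an object have a common refinement which is a finite disjoint covering family; (M) all morphisms are monomorphisms. Maps $A\to C$, $B\to C$ are disjoint if $A\times_CB$ exists and is initial. Conditions: (S) there is an object $S$ (the sink) with $\mathcal{C}(A,S)\neq\emptyset$ for all $A$; (Ep) all morphisms with noninitial domain are epimorphisms and every family $\{A\to B\}$ with $A\ne\varnothing$ is covering; (D) for $A,B\neq\varnothing$ no two morphisms $A\to C$, $B\to C$ are disjoint. For such an assembler with sink $S$, the group $G$ consists of classes $[S\xleftarrow{f_1}A\xrightarrow{f_2}S]$ with $A$ noninitial, modulo the equivalence relation generated by $[A;f_1,f_2]\sim[B;g_1,g_2]$ when there are $h:C\to A$, $k:C\to B$ with $f_1h=g_1k$, $f_2h=g_2k$; the product is $[A;f_1,f_2]\cdot[B;g_1,g_2]=[X;f_1g_1',g_2f_2']$ for any noninitial $X$ with $g_1':X\to A$, $f_2':X\to B$, $f_2g_1'=g_1f_2'$. $\mathcal{S}_G$ is the assembler with objects $\varnothing,*$, one morphism $\varnothing\to *$, $\mathrm{Aut}( * )=G$, and a homomorphism of groups induces a morphism between such assemblers. For a family $\mathcal{F}=\{f_A:A\to S\}$, $\pi_{\mathcal{F}}$ sends noninitial objects to $*$ and $g:A\to B$ to $[A;f_A,f_Bg]$. *)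

From Stdlib Require Import List Relations.
Import ListNotations.
Set Implicit Arguments.
Unset Strict Implicit.

Record Cat := {
  Obj :> Type;
  Hom : Obj -> Obj -> Type;
  idm : forall A, Hom A A;
  comp : forall A B D, Hom B D -> Hom A B -> Hom A D;
  comp_id_l : forall A B (f : Hom A B), comp (idm B) f = f;
  comp_id_r : forall A B (f : Hom A B), comp f (idm A) = f;
  comp_assoc : forall A B D E (h : Hom D E) (g : Hom B D) (f : Hom A B),
      comp h (comp g f) = comp (comp h g) f
}.
Arguments Hom {c} _ _.
Arguments idm {c} _.
Arguments comp {c A B D} _ _.
Notation "g ∘ f" := (comp g f) (at level 40, left associativity).

Section CatDefs.
Variable C : Cat.

Definition initial (A : C) : Prop :=
  forall B : C, inhabited (Hom A B) /\ forall f g : Hom A B, f = g.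

Definition mono {A B : C} (f : Hom A B) : Prop :=
  forall (X : C) (g h : Hom X A), f ∘ g = f ∘ h -> g = h.

Definition epi {A B : C} (f : Hom A B) : Prop :=
  forall (X : C) (g h : Hom B X), g ∘ f = h ∘ f -> g = h.

Definition is_pullback {A B D : C} (f : Hom A D) (g : Hom B D)
    (P : C) (p1 : Hom P A) (p2 : Hom P B) : Prop :=
  f ∘ p1 = g ∘ p2 /\
  forall (Q : C) (q1 : Hom Q A) (q2 : Hom Q B), f ∘ q1 = g ∘ q2 ->
    exists! u : Hom Q P, p1 ∘ u = q1 /\ p2 ∘ u = q2.

Definition disjoint {A B D : C} (f : Hom A D) (g : Hom B D) : Prop :=
  exists (P : C) (p1 : Hom P A) (p2 : Hom P B), is_pullback f g p1 p2 /\ initial P.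

Definition sieve (A : C) := forall B : C, Hom B A -> Prop.

Definition is_sieve {A : C} (R : sieve A) : Prop :=
  forall (B D : C) (f : Hom B A) (g : Hom D B), R B f -> R D (f ∘ g).

Definition pullback_sieve {A B : C} (h : Hom B A) (R : sieve A) : sieve B :=
  fun D g => R D (h ∘ g).

Record GTopology := {
  covers : forall A : C, sieve A -> Prop;
  covers_sieve : forall A (R : sieve A), covers R -> is_sieve R;
  covers_max : forall A : C, covers (fun (B : C) (_ : Hom B A) => True);
  covers_stable : forall A (R : sieve A), covers R ->
      forall (B : C) (h : Hom B A), covers (pullback_sieve h R);
  covers_local : forall A (R R' : sieve A), covers R -> is_sieve R' ->
      (forall (B : C) (f : Hom B A), R B f -> covers (pullback_sieve f R')) ->
      covers R'
}.

Definition family (A : C) := list {B : C & Hom B A}.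

Definition gen_sieve {A : C} (F : family A) : sieve A :=
  fun B g => exists x, In x F /\ exists h : Hom B (projT1 x), g = projT2 x ∘ h.

Definition covering (J : GTopology) {A : C} (F : family A) : Prop :=
  covers J (gen_sieve F).

Definition pairwise_disjoint {A : C} (F : family A) : Prop :=
  forall (i j : nat) x y, i <> j -> nth_error F i = Some x -> nth_error F j = Some y ->
    disjoint (projT2 x) (projT2 y).

Definition fin_disj_covering (J : GTopology) {A : C} (F : family A) : Prop :=
  covering J F /\ pairwise_disjoint F.

Definition refines {A : C} (G F : family A) : Prop :=
  forall y, In y G -> exists x, In x F /\
    exists h : Hom (projT1 y) (projT1 x), projT2 y = projT2 x ∘ h.

End CatDefs.

Record Assembler := {
  asm_cat :> Cat;
  asm_top : GTopology asm_cat;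
  asm_I : exists E : asm_cat, initial E /\ covering asm_top (@nil {B : asm_cat & Hom B E});
  asm_R : forall (A : asm_cat) (F1 F2 : family A),
      fin_disj_covering asm_top F1 -> fin_disj_covering asm_top F2 ->
      exists F3 : family A, fin_disj_covering asm_top F3 /\ refines F3 F1 /\ refines F3 F2;
  asm_M : forall (A B : asm_cat) (f : Hom A B), mono f
}.

Definition is_sink (C : Cat) (S : C) : Prop := forall A : C, inhabited (Hom A S).

Definition cond_Ep (C : Assembler) : Prop :=
  forall (A B : C) (f : Hom A B), ~ initial A ->
    epi f /\ covering (asm_top C) [existT (fun X : C => Hom X B) A f].

Definition cond_D (C : Assembler) : Prop :=
  forall (A B D : C) (f : Hom A D) (g : Hom B D),
    ~ initial A -> ~ initial B -> ~ disjoint f g.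

Section FullSub.
Variable C : Cat.
Variable U : C.

Definition CU_obj := {A : C | inhabited (Hom A U)}.
Definition CU_hom (X Y : CU_obj) := Hom (proj1_sig X) (proj1_sig Y).

Definition CU : Cat :=
  {| Obj := CU_obj; Hom := CU_hom;
     idm := fun X => idm (proj1_sig X);
     comp := fun X Y Z (g : CU_hom Y Z) (f : CU_hom X Y) => g ∘ f;
     comp_id_l := fun X Y f => comp_id_l f;
     comp_id_r := fun X Y f => comp_id_r f;
     comp_assoc := fun X Y Z W h g f => comp_assoc h g f |}.

Definition CU_U : CU := exist (fun A : C => inhabited (Hom A U)) U (inhabits (idm U)).

Definition j_obj (X : CU) : C := proj1_sig X.
End FullSub.

Section Group.
Variable C : Cat.
Variable S : C.

Record span := mkSpan { sp_obj : C; sp_l : Hom sp_obj S; sp_r : Hom sp_obj S }.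

Definition span_rel0 (s t : span) : Prop :=
  ~ initial (sp_obj s) /\ ~ initial (sp_obj t) /\
  exists (X : C) (h : Hom X (sp_obj s)) (k : Hom X (sp_obj t)),
    ~ initial X /\ sp_l s ∘ h = sp_l t ∘ k /\ sp_r s ∘ h = sp_r t ∘ k.

Definition span_eq : span -> span -> Prop := clos_refl_sym_trans span span_rel0.

Definition cls (s : span) : span -> Prop := span_eq s.

Definition Grp := {P : span -> Prop | exists s : span, ~ initial (sp_obj s) /\ P = cls s}.

(* graph of the product:
   [A;f1,f2] . [B;g1,g2] = [X; f1 g1', g2 f2']  for noninitial X,
   g1' : X -> A, f2' : X -> B with f2 g1' = g1 f2' *)
Definition Gmul (x y z : Grp) : Prop :=
  exists (a b : span) (X : C) (g1' : Hom X (sp_obj a)) (f2' : Hom X (sp_obj b)),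
    ~ initial (sp_obj a) /\ ~ initial (sp_obj b) /\ ~ initial X /\
    proj1_sig x = cls a /\ proj1_sig y = cls b /\
    sp_r a ∘ g1' = sp_l b ∘ f2' /\
    proj1_sig z = cls (@mkSpan X (sp_l a ∘ g1') (sp_r b ∘ f2')).
End Group.

Definition is_group_iso (C1 : Cat) (S1 : C1) (C2 : Cat) (S2 : C2)
    (phi : Grp S1 -> Grp S2) : Prop :=
  (forall x y, phi x = phi y -> x = y) /\
  (forall z, exists x, phi x = z) /\
  (forall x y z, Gmul x y z -> Gmul (phi x) (phi y) (phi z)).

(* Composition with [f U : U -> S] sends spans [U <- A -> U] of C_U to spans [S <- A -> S]
   of C. Condition (D) says that any two morphisms out of noninitial objects into a
   common target can be completed to a commutative square with noninitial apex; hence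
   the generating relation on spans is already an equivalence, so two spans are
   equivalent exactly when they are related in one step. One-step relatedness is
   preserved by composition with [f U] and, since [f U] is a monomorphism, reflected:
   this gives injectivity. Surjectivity comes from completing the legs of a span of C
   against [f U] twice, which factors both legs through [U]. *)
From Stdlib Require Import Relations Classical FunctionalExtensionality PropExtensionality
  ProofIrrelevance.
Set Implicit Arguments.
Unset Strict Implicit.

Lemma initial_hom_eq (C : Cat) (A B : C) (g h : Hom A B) : initial A -> g = h.
Proof. intros HA. exact (proj2 (HA B) g h). Qed.

Section SpanClasses.
Variables (C : Cat) (S : C).

Lemma cls_eq_of_span_eq (s t : span S) : span_eq s t -> cls s = cls t.
Proof.
  intros Hst. apply functional_extensionality; intro u.
  apply propositional_extensionality; split; intro Hu.
  - exact (rst_trans _ _ _ _ _ (rst_sym _ _ _ _ Hst) Hu).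
  - exact (rst_trans _ _ _ _ _ Hst Hu).
Qed.

Lemma span_eq_of_cls_eq (s t : span S) : cls s = cls t -> span_eq s t.
Proof. intros Hst. assert (Ht : cls t t) by apply rst_refl. now rewrite <- Hst in Ht. Qed.

Lemma Grp_eq (x y : Grp S) : proj1_sig x = proj1_sig y -> x = y.
Proof. destruct x, y; simpl; intros; subst; f_equal; apply proof_irrelevance. Qed.

Lemma span_rel0_refl (s : span S) : ~ initial (sp_obj s) -> span_rel0 s s.
Proof.
  intros ns. split; [exact ns | split; [exact ns |]].
  exists (sp_obj s), (idm _), (idm _). auto.
Qed.

Lemma span_rel0_sym (s t : span S) : span_rel0 s t -> span_rel0 t s.
Proof.
  intros [ns [nt [X [h [k [nX [el er]]]]]]].
  split; [exact nt | split; [exact ns |]]. exists X, k, h. auto.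
Qed.

End SpanClasses.

Definition completes_cospans (C : Cat) : Prop :=
  forall (A B D : C) (a : Hom A D) (b : Hom B D), ~ initial A -> ~ initial B ->
    exists (X : C) (x1 : Hom X A) (x2 : Hom X B), ~ initial X /\ a ∘ x1 = b ∘ x2.

(* If no such square existed, the initial object would be a pullback of [a] and [b]. *)
Lemma cond_D_completes_cospans (C : Assembler) : cond_D C -> completes_cospans C.
Proof.
  intros HD A B D a b nA nB. apply NNPP; intro Hno.
  apply (HD A B D a b nA nB).
  destruct (asm_I C) as [E [HE _]].
  destruct (HE A) as [[e1] _]. destruct (HE B) as [[e2] _].
  exists E, e1, e2. split; [split | exact HE].
  - now apply initial_hom_eq.
  - intros Q q1 q2 Hq.
    assert (HQ : initial Q).
    { apply NNPP; intro nQ. apply Hno. now exists Q, q1, q2. }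
    destruct (HQ E) as [[u] _]. exists u.
    split; [split |]; intros; now apply initial_hom_eq.
Qed.

Section SpanEquivalence.
Variables (C : Cat) (S : C).
Hypothesis completion : completes_cospans C.

Lemma span_rel0_trans (s t u : span S) :
  span_rel0 s t -> span_rel0 t u -> span_rel0 s u.
Proof.
  intros [ns [nt [X [h [k [nX [e1 e2]]]]]]] [_ [nu [Y [h' [k' [nY [e3 e4]]]]]]].
  destruct (completion k h' nX nY) as [Z [z1 [z2 [nZ ez]]]].
  split; [exact ns | split; [exact nu |]].
  exists Z, (h ∘ z1), (k' ∘ z2). split; [exact nZ | split].
  - rewrite !comp_assoc, e1, <- e3, <- !comp_assoc, ez. reflexivity.
  - rewrite !comp_assoc, e2, <- e4, <- !comp_assoc, ez. reflexivity.
Qed.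

Lemma span_eq_rel0 (s t : span S) :
  span_eq s t -> ~ initial (sp_obj s) -> span_rel0 s t.
Proof.
  intros Hst ns.
  assert (Hor : s = t \/ span_rel0 s t).
  { clear ns. induction Hst as [x y Hxy | x | x y _ IH | x y z _ IH1 _ IH2].
    - now right.
    - now left.
    - destruct IH as [-> | IH]; [now left | right; now apply span_rel0_sym].
    - destruct IH1 as [-> | IH1]; destruct IH2 as [-> | IH2]; auto.
      right; exact (span_rel0_trans IH1 IH2). }
  destruct Hor as [<- | Hst']; [now apply span_rel0_refl | exact Hst'].
Qed.

End SpanEquivalence.

Section Restriction.
Variables (C : Cat) (U E : C).
Hypothesis HE : initial E.

(* [E] lies in C_U, so an initial object of C_U has a map to [E], which it retracts. *)
Lemma initial_CU_iff (A : CU U) : initial (C := C) (proj1_sig A) <-> initial (C := CU U) A.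
Proof.
  split.
  - intros HA B. exact (HA (proj1_sig B)).
  - intros HA B.
    destruct (HE U) as [[eU] _].
    destruct (HA (exist (fun X : C => inhabited (Hom X U)) E (inhabits eU))) as [[a] _].
    destruct (HE (proj1_sig A)) as [[e] _].
    assert (Hret : @comp C _ _ _ e a = idm (proj1_sig A)) by exact (proj2 (HA A) _ _).
    destruct (HE B) as [[b] Hb]. split; [exact (inhabits (b ∘ a)) |].
    intros g h. rewrite <- (comp_id_r g), <- (comp_id_r h), <- Hret, !comp_assoc.
    now rewrite (Hb (g ∘ e) (h ∘ e)).
Qed.

Variables (S : C) (fU : Hom U S).

Definition span_push (s : span (C := CU U) (CU_U U)) : span S :=
  @mkSpan C S (proj1_sig (sp_obj s)) (fU ∘ (sp_l s : Hom _ U)) (fU ∘ (sp_r s : Hom _ U)).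

Lemma span_push_noninitial (s : span (C := CU U) (CU_U U)) :
  ~ initial (sp_obj s) -> ~ initial (sp_obj (span_push s)).
Proof. intros ns Hs. apply ns, initial_CU_iff, Hs. Qed.

Lemma span_rel0_push (s t : span (C := CU U) (CU_U U)) :
  span_rel0 s t -> span_rel0 (span_push s) (span_push t).
Proof.
  intros [ns [nt [X [h [k [nX [el er]]]]]]].
  split; [now apply span_push_noninitial | split; [now apply span_push_noninitial |]].
  exists (proj1_sig X), h, k.
  split; [intro HX; apply nX, initial_CU_iff, HX |].
  simpl; rewrite <- !comp_assoc.
  split; [exact (f_equal (comp fU) el) | exact (f_equal (comp fU) er)].
Qed.

Lemma span_eq_push (s t : span (C := CU U) (CU_U U)) :
  span_eq s t -> span_eq (span_push s) (span_push t).
Proof.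
  induction 1.
  - apply rst_step, span_rel0_push. assumption.
  - apply rst_refl.
  - apply rst_sym. assumption.
  - eapply rst_trans; eassumption.
Qed.

Lemma span_rel0_push_inv (s t : span (C := CU U) (CU_U U)) :
  mono fU -> span_rel0 (span_push s) (span_push t) -> span_rel0 s t.
Proof.
  intros HfU [ns [nt [X [h [k [nX [el er]]]]]]]. simpl in *.
  split; [intro Hs; apply ns, initial_CU_iff, Hs |].
  split; [intro Ht; apply nt, initial_CU_iff, Ht |].
  set (XU := exist (fun Y : C => inhabited (Hom Y U)) X (inhabits (@comp C _ _ _ (sp_l s) h))).
  exists XU, h, k. split; [intro HX; apply nX, (initial_CU_iff XU), HX |].
  split; apply HfU; simpl; rewrite !comp_assoc; assumption.
Qed.

Definition class_push (P : span (C := CU U) (CU_U U) -> Prop) : span S -> Prop :=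
  fun t => exists s, P s /\ span_eq (span_push s) t.

Lemma class_push_cls (a : span (C := CU U) (CU_U U)) :
  class_push (cls a) = cls (span_push a).
Proof.
  apply functional_extensionality; intro t.
  apply propositional_extensionality; split.
  - intros [s [Has Hst]]. exact (rst_trans _ _ _ _ _ (span_eq_push Has) Hst).
  - intros Hat. exists a. split; [apply rst_refl | exact Hat].
Qed.

Lemma class_push_Grp (x : Grp (C := CU U) (CU_U U)) :
  exists t : span S, ~ initial (sp_obj t) /\ class_push (proj1_sig x) = cls t.
Proof.
  destruct (proj2_sig x) as [a [na ->]].
  exists (span_push a). split; [now apply span_push_noninitial | apply class_push_cls].
Qed.

Definition Grp_push (x : Grp (C := CU U) (CU_U U)) : Grp S :=
  exist _ (class_push (proj1_sig x)) (class_push_Grp x).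

Lemma Grp_push_cls (x : Grp (C := CU U) (CU_U U)) (a : span (C := CU U) (CU_U U)) :
  proj1_sig x = cls a -> proj1_sig (Grp_push x) = cls (span_push a).
Proof. simpl; intros ->. apply class_push_cls. Qed.

Lemma Grp_push_mul (x y z : Grp (C := CU U) (CU_U U)) :
  Gmul x y z -> Gmul (Grp_push x) (Grp_push y) (Grp_push z).
Proof.
  intros [a [b [X [g1' [f2' [na [nb [nX [ex [ey [e ez]]]]]]]]]]].
  exists (span_push a), (span_push b), (proj1_sig X), g1', f2'.
  split; [now apply span_push_noninitial |].
  split; [now apply span_push_noninitial |].
  split; [intro HX; apply nX, initial_CU_iff, HX |].
  split; [now apply Grp_push_cls |].
  split; [now apply Grp_push_cls |].
  split.
  - simpl; rewrite <- !comp_assoc. exact (f_equal (comp fU) e).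
  - rewrite (Grp_push_cls ez). unfold span_push. simpl. f_equal. f_equal; apply comp_assoc.
Qed.

Hypothesis completion : completes_cospans C.

Lemma Grp_push_injective (x y : Grp (C := CU U) (CU_U U)) :
  mono fU -> Grp_push x = Grp_push y -> x = y.
Proof.
  intros HfU Hxy.
  destruct (proj2_sig x) as [a [na ea]], (proj2_sig y) as [b [nb eb]].
  assert (Hab : cls (span_push a) = cls (span_push b)).
  { rewrite <- (Grp_push_cls ea), <- (Grp_push_cls eb), Hxy. reflexivity. }
  apply Grp_eq. rewrite ea, eb. apply cls_eq_of_span_eq, rst_step.
  apply (span_rel0_push_inv HfU), (span_eq_rel0 completion).
  - exact (span_eq_of_cls_eq Hab).
  - now apply span_push_noninitial.
Qed.

(* Factor the left leg of [u] through [fU] by a first completion, then the right leg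
   (restricted to the apex obtained) by a second one. *)
Lemma Grp_push_surjective (z : Grp S) :
  ~ initial U -> exists x, Grp_push x = z.
Proof.
  intros nU. destruct (proj2_sig z) as [u [nu eu]].
  destruct (completion (sp_l u) fU nu nU) as [X [x1 [x2 [nX e1]]]].
  destruct (completion (sp_r u ∘ x1) fU nX nU) as [Y [y1 [y2 [nY e2]]]].
  set (YU := exist (fun Z : C => inhabited (Hom Z U)) Y (inhabits y2) : CU U).
  set (w := @mkSpan (CU U) (CU_U U) YU (x2 ∘ y1 : Hom Y U) (y2 : Hom Y U)).
  assert (nw : ~ initial (C := CU U) YU) by (intro HY; apply nY, (initial_CU_iff YU), HY).
  set (xw := exist _ (cls w) (ex_intro _ w (conj nw eq_refl)) : Grp (C := CU U) (CU_U U)).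
  exists xw. apply Grp_eq. rewrite (Grp_push_cls (x := xw) (a := w) eq_refl), eu.
  apply cls_eq_of_span_eq, rst_step.
  split; [exact nY | split; [exact nu |]].
  exists Y, (idm Y), (x1 ∘ y1). split; [exact nY | split]; simpl; rewrite comp_id_r.
  - now rewrite comp_assoc, <- e1, <- comp_assoc.
  - now rewrite comp_assoc, e2.
Qed.

End Restriction.

Theorem proposition3p9 (C : Assembler) (S : C)
  (HS : is_sink S) (HEp : cond_Ep C) (HD : cond_D C)
  (U : C) (HU : ~ initial U)
  (f : forall A : C, Hom A S) (hfS : f S = idm S)
  (f' : forall A : CU U, Hom (j_obj A) U) (hf'U : f' (CU_U U) = idm U)
  (hff' : forall A : CU U, f (j_obj A) = f U ∘ f' A) :
  exists phi : Grp (C := CU U) (CU_U U) -> Grp (C := C) S,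
    is_group_iso phi /\
    (* pi_F o j = phi_* o pi_F' on objects *)
    (forall A : CU U, initial (C := C) (j_obj A) <-> initial (C := CU U) A) /\
    (* ... and on morphisms with noninitial domain (all other hom-sets of S_G are singletons) *)
    (forall (A B : CU U) (g : Hom A B) (x : Grp (C := CU U) (CU_U U)),
       ~ initial (C := CU U) A ->
       proj1_sig x = cls (@mkSpan (CU U) (CU_U U) A (f' A) (f' B ∘ g)) ->
       proj1_sig (phi x) = cls (@mkSpan C S (j_obj A) (f (j_obj A)) (f (j_obj B) ∘ g))).
Proof.
  destruct (asm_I C) as [E [HE _]].
  pose proof (cond_D_completes_cospans HD) as completion.
  exists (Grp_push HE (f U)). split; [| split].
  - split; [| split].
    + intros x y. apply (Grp_push_injective completion), asm_M.
    + intros z. exact (Grp_push_surjective HE (f U) completion z HU).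
    + apply Grp_push_mul.
  - apply (initial_CU_iff HE).
  - intros A B g x _ Hx. rewrite (Grp_push_cls HE (f U) Hx). unfold span_push. simpl.
    rewrite !hff'. f_equal. f_equal. apply comp_assoc.
Qed.
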